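(* Let $\mathcal A=\{A_s\}_{s\in\mathbf S}\subset CQ(\mathbf X,\mathcal H)$ be an AVcqC ($\mathbf S$ finite) with $C_{A,d}(\mathcal A)>0$, and let $0<R<C_{A,d}(\mathcal A)$. For every sequence of $(l,M_l)$ codes $(x_i^l,D_i^l)_{i=1}^{M_l}$ with $\liminf_l\frac1l\log M_l\ge R$ and $\lim_{l\to\infty}\min_{i\in[M_l]}\min_{s^l\in\mathbf S^l}\mathrm{tr}(A_{s^l}(x_i^l)D_i^l)=1$, there is another sequence of $(l,M_l)$ codes $(x_i^l,\tilde D_i^l)_{i=1}^{M_l}$ with the same codewords and modified decoding operators such that (1) $\liminf_l\frac1l\log M_l\ge R$; (2) $\lim_{l\to\infty}\min_{i\in[M_l]}\min_{s^l\in\mathbf S^l}\mathrm{tr}(A_{s^l}(x_i^l)\tilde D_i^l)=1$; (3) for all $l\in\mathbb N$, $i\in[M_l]$ and $s^l\in\mathbf S^l$: $\mathrm{tr}(A_{s^l}(x_i^l)\tilde D_i^l)<1$.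
   Context: $\mathbf X$ finite, $\mathcal H$ finite-dimensional, $CQ(\mathbf X,\mathcal H)$ the maps $\mathbf X\to\mathcal S(\mathcal H)$; $A_{s^l}(x^l)=\bigotimes_iA_{s_i}(x_i)$. An $(l,M)$ code is $(x_i^l,D_i^l)_{i=1}^M$, $x_i^l\in\mathbf X^l$, $D_i^l\ge0$, $\sum_iD_i^l\le\mathbf 1$. $C_{A,d}(\mathcal A)$ is the supremum of rates $R'$ achievable by such codes with $\liminf_l\frac1l\log M_l\ge R'$ and $\lim_l\max_{s^l}\max_i\mathrm{tr}(A_{s^l}(x_i^l)(\mathbf 1-D_i^l))=0$ (maximal error criterion). *)

From HB Require Import structures.
From mathcomp Require Import all_boot all_order all_algebra.
From mathcomp Require Import all_classical all_reals all_analysis.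
From mathcomp Require Import complex mxtens.

Set Implicit Arguments.
Unset Strict Implicit.
Unset Printing Implicit Defensive.

Import Order.TTheory GRing.Theory Num.Theory.
Local Open Scope ring_scope.
Local Open Scope classical_set_scope.
Import numFieldNormedType.Exports.

Section QDefs.
Variable R : realType.
Local Notation C := (R[i]).

Fixpoint pdim (d l : nat) : nat :=
  match l with 0 => 1%N | l'.+1 => (d * pdim d l')%N end.

Definition adjmx {m n : nat} (A : 'M[C]_(m, n)) : 'M[C]_(n, m) :=
  map_mx Num.conj (A^T).

Definition psd {n : nat} (A : 'M[C]_n) : Prop :=
  adjmx A = A /\ forall v : 'cV[C]_n, 0 <= (adjmx v *m A *m v) 0 0.

Definition is_state {n : nat} (rho : 'M[C]_n) : Prop :=
  psd rho /\ \tr rho = 1.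

Fixpoint tens {d : nat} (l : nat) : ('I_l -> 'M[C]_d) -> 'M[C]_(pdim d l) :=
  match l as n return ('I_n -> 'M[C]_d) -> 'M[C]_(pdim d n) with
  | 0 => fun _ => 1%:M
  | l'.+1 => fun f => tensmx (f ord0) (tens (fun i : 'I_l' => f (lift ord0 i)))
  end.

Definition Atens {S X : finType} {d : nat} (A : S -> X -> 'M[C]_d) (l : nat)
  (s : 'I_l -> S) (x : 'I_l -> X) : 'M[C]_(pdim d l) :=
  tens (fun i => A (s i) (x i)).

(* an AVcqC: a family of cq channels X -> S(H), indexed by S *)
Definition is_AVcqC {S X : finType} {d : nat} (A : S -> X -> 'M[C]_d) : Prop :=
  forall s x, is_state (A s x).

Definition is_code {d l M : nat} (D : 'I_M -> 'M[C]_(pdim d l)) : Prop :=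
  (forall i, psd (D i)) /\ psd (1%:M - \sum_(i < M) D i).

Definition rate_liminf (M : nat -> nat) : \bar R :=
  limn_einf (fun l => ((ln (M l)%:R / l%:R : R))%:E).

Definition max_err {S X : finType} {d : nat} (A : S -> X -> 'M[C]_d)
  (l M : nat) (x : 'I_M -> 'I_l -> X) (D : 'I_M -> 'M[C]_(pdim d l)) : R :=
  \big[Num.max/0]_(s : {ffun 'I_l -> S})
    \big[Num.max/0]_(i < M)
       complex.Re (\tr (Atens A s (x i) *m (1%:M - D i))).

(* min_i min_{s^l} tr(A_{s^l}(x_i^l) D_i^l)  (1 on an empty index set) *)
Definition min_succ {S X : finType} {d : nat} (A : S -> X -> 'M[C]_d)
  (l M : nat) (x : 'I_M -> 'I_l -> X) (D : 'I_M -> 'M[C]_(pdim d l)) : R :=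
  \big[Num.min/1]_(i < M)
    \big[Num.min/1]_(s : {ffun 'I_l -> S})
       complex.Re (\tr (Atens A s (x i) *m D i)).

(* R' is achievable with deterministic codes under maximal error criterion *)
Definition achievable {S X : finType} {d : nat} (A : S -> X -> 'M[C]_d)
  (r : R) : Prop :=
  exists (M : nat -> nat) (x : forall l, 'I_(M l) -> 'I_l -> X)
         (D : forall l, 'I_(M l) -> 'M[C]_(pdim d l)),
    (forall l, is_code (D l)) /\
    (r%:E <= rate_liminf M)%E /\
    (fun l => max_err A (x l) (D l)) @ \oo --> (0 : R).

Definition cap_det {S X : finType} {d : nat} (A : S -> X -> 'M[C]_d) : \bar R :=
  ereal_sup [set r%:E | r in achievable A].

End QDefs.
Arguments rate_liminf {R} M.

(* Shrink every decoding operator by a factor [c_l = 1 - 1/(l+1) < 1].  The result is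
   still a code with the same codewords, and its worst-case success probability is at
   least [c_l] times the old one, hence still tends to 1.  Conversely, for a state [rho]
   and an operator [0 <= D <= 1] we have [tr (rho D) <= 1], because the trace of a
   product of two positive semidefinite operators is nonnegative; so every shrunk
   success probability is at most [c_l < 1]. *)
From HB Require Import structures.
From mathcomp Require Import all_boot all_order all_algebra.
From mathcomp Require Import all_classical all_reals all_analysis.
From mathcomp Require Import complex mxtens.

Set Implicit Arguments.
Unset Strict Implicit.
Unset Printing Implicit Defensive.

Import Order.TTheory GRing.Theory Num.Theory.
Local Open Scope ring_scope.
Local Open Scope classical_set_scope.
Import numFieldNormedType.Exports.

Section PositiveOperators.
Variable R : realType.
Local Notation C := (R[i]).

Lemma adjmx_mul m n p (A : 'M[C]_(m, n)) (B : 'M[C]_(n, p)) :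
  adjmx (A *m B) = adjmx B *m adjmx A.
Proof. by rewrite /adjmx trmx_mul map_mxM. Qed.

Lemma adjmxK m n (A : 'M[C]_(m, n)) : adjmx (adjmx A) = A.
Proof. by apply/matrixP => i j; rewrite !mxE conjCK. Qed.

Lemma adjmxD m n (A B : 'M[C]_(m, n)) : adjmx (A + B) = adjmx A + adjmx B.
Proof. by apply/matrixP => i j; rewrite !mxE rmorphD. Qed.

Lemma adjmx1 n : adjmx (1%:M : 'M[C]_n) = 1%:M.
Proof.
by apply/matrixP => i j; rewrite !mxE eq_sym; case: eqP; rewrite ?conjC1 ?conjC0.
Qed.

Lemma adjmxZ m n (c : C) (A : 'M[C]_(m, n)) : adjmx (c *: A) = c^* *: adjmx A.
Proof. by apply/matrixP => i j; rewrite !mxE rmorphM. Qed.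

Lemma adjmx_tens m n p q (A : 'M[C]_(m, n)) (B : 'M[C]_(p, q)) :
  adjmx (tensmx A B) = tensmx (adjmx A) (adjmx B).
Proof. by rewrite /adjmx trmx_tens map_mxT. Qed.

Lemma tr_gram_ge0 m n (E : 'M[C]_(m, n)) : 0 <= \tr (adjmx E *m E).
Proof.
apply: sumr_ge0 => i _; rewrite !mxE; apply: sumr_ge0 => k _.
by rewrite !mxE mulrC mul_conjC_ge0.
Qed.

Lemma psd_gram m n (B : 'M[C]_(m, n)) : psd (adjmx B *m B).
Proof.
split; first by rewrite adjmx_mul adjmxK.
move=> v; have := tr_gram_ge0 (B *m v).
by rewrite adjmx_mul !mulmxA /mxtrace big_ord1.
Qed.

Lemma psd1 n : psd (1%:M : 'M[C]_n).
Proof. by have := psd_gram (1%:M : 'M[C]_n); rewrite adjmx1 mulmx1. Qed.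

Lemma psdD n (P Q : 'M[C]_n) : psd P -> psd Q -> psd (P + Q).
Proof.
move=> [hP gP] [hQ gQ]; split; first by rewrite adjmxD hP hQ.
by move=> v; rewrite mulmxDr mulmxDl mxE addr_ge0.
Qed.

Lemma psdZ n (c : R) (P : 'M[C]_n) : 0 <= c -> psd P -> psd (c%:C%C *: P).
Proof.
move=> c0 [hP gP]; split; first by rewrite adjmxZ hP geC0_conj // ler0c.
by move=> v; rewrite -scalemxAr -scalemxAl mxE mulr_ge0 // ler0c.
Qed.

Lemma psd0 n : psd (0 : 'M[C]_n).
Proof. by have := psdZ (lexx 0) (psd1 n); rewrite scale0r. Qed.

Lemma psd_sum n I (r : seq I) (F : I -> 'M[C]_n) :
  (forall i, psd (F i)) -> psd (\sum_(i <- r) F i).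
Proof. by move=> psdF; elim/big_ind: _ => //; [exact: psd0 | exact: psdD]. Qed.

Local Open Scope sesquilinear_scope.

(* Spectral theorem: [P = U^* diag(sp) U] with [sp >= 0], so [B = diag(sqrt sp) U]. *)
Lemma psd_gramP n (P : 'M[C]_n) : psd P -> exists B : 'M[C]_n, P = adjmx B *m B.
Proof.
move=> [hP gP].
have /orthomx_spectralP P_spectral : P \is normalmx.
  by apply/hermitian_normalmx/is_hermitianmxP; rewrite expr0 scale1r; exact: esym hP.
set U := spectralmx P in P_spectral; set sp := spectral_diag P in P_spectral.
have U_unitary : U \is unitarymx by apply: spectral_unitarymx.
have UUadj : U *m adjmx U = 1%:M by apply/unitarymxP.
rewrite invmx_unitary // in P_spectral.
have sp_ge0 j : 0 <= sp 0 j.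
  pose e : 'cV[C]_n := delta_mx j 0.
  have := gP (adjmx U *m e).
  rewrite adjmx_mul adjmxK P_spectral !mulmxA -[_ *m U *m adjmx U]mulmxA UUadj.
  rewrite mulmx1 -[_ *m U *m adjmx U]mulmxA UUadj mulmx1 mul_mx_diag mxE.
  rewrite (bigD1 j) //= big1 ?addr0 => [|k /negbTE kj]; last by rewrite !mxE kj mulr0.
  by rewrite !mxE !eqxx /= conjC1 mul1r !mulr1.
exists (diag_mx (\row_j sqrtC (sp 0 j)) *m U).
rewrite adjmx_mul P_spectral -!mulmxA; congr (_ *m _); rewrite !mulmxA; congr (_ *m _).
rewrite /adjmx tr_diag_mx map_diag_mx mulmx_diag; congr diag_mx.
apply/rowP => j; rewrite !mxE -[LHS]sqrtCK expr2; congr (_ * _).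
by apply/esym/geC0_conj; rewrite sqrtC_ge0.
Qed.

Local Close Scope sesquilinear_scope.

Lemma tr_mul_psd_ge0 n (P Q : 'M[C]_n) : psd P -> psd Q -> 0 <= \tr (P *m Q).
Proof.
move=> /psd_gramP [B ->] /psd_gramP [E ->].
rewrite mulmxA mxtrace_mulC !mulmxA.
have -> : E *m adjmx B *m B *m adjmx E = adjmx (B *m adjmx E) *m (B *m adjmx E).
  by rewrite adjmx_mul adjmxK !mulmxA.
exact: tr_gram_ge0.
Qed.

Lemma Re_tr_state_le1 n (rho E : 'M[C]_n) :
  is_state rho -> psd (1%:M - E) -> complex.Re (\tr (rho *m E)) <= 1.
Proof.
move=> [rho_psd tr_rho] psd1E; have := tr_mul_psd_ge0 rho_psd psd1E.
rewrite mulmxBr mulmx1 linearB /= tr_rho.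
by case: (\tr (rho *m E)) => a b; rewrite lecE /= subr_ge0 => /andP[].
Qed.

Lemma Re_tr_scale n (c : R) (T E : 'M[C]_n) :
  complex.Re (\tr (T *m (c%:C%C *: E))) = c * complex.Re (\tr (T *m E)).
Proof. by rewrite -scalemxAr mxtraceZ; case: (\tr _) => a b /=; rewrite mul0r subr0. Qed.

End PositiveOperators.

Section TensorStates.
Variable R : realType.
Local Notation C := (R[i]).

Lemma tr_tensmx m n (A : 'M[C]_m) (B : 'M[C]_n) : \tr (tensmx A B) = \tr A * \tr B.
Proof.
rewrite /mxtrace (reindex (@mxtens_index m n)); last first.
  by exists (@mxtens_unindex m n) => k _; rewrite ?mxtens_indexK ?mxtens_unindexK.
rewrite (eq_bigr (fun ij : 'I_m * 'I_n => A ij.1 ij.1 * B ij.2 ij.2)); last first.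
  by move=> [i j] _; rewrite tensmxE.
rewrite -(pair_bigA _ (fun i j => A i i * B j j)) /= big_distrl /=.
by apply: eq_bigr => i _; rewrite big_distrr.
Qed.

Lemma psd_tens d l (f : 'I_l -> 'M[C]_d) : (forall i, psd (f i)) -> psd (tens f).
Proof.
elim: l f => [|l IH] f psd_f /=; first exact: psd1.
have [B0 ->] := psd_gramP (psd_f ord0).
have [B1 ->] := psd_gramP (IH _ (fun i => psd_f (lift ord0 i))).
by rewrite -tensmx_mul -adjmx_tens; apply: psd_gram.
Qed.

Lemma tr_tens d l (f : 'I_l -> 'M[C]_d) : (forall i, \tr (f i) = 1) -> \tr (tens f) = 1.
Proof.
elim: l f => [|l IH] f tr_f /=; first by rewrite mxtrace1.
by rewrite tr_tensmx tr_f IH ?mulr1.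
Qed.

Lemma is_state_Atens (S X : finType) d (A : S -> X -> 'M[C]_d) l
    (s : 'I_l -> S) (x : 'I_l -> X) :
  is_AVcqC A -> is_state (Atens A s x).
Proof.
move=> hA; split; first by apply: psd_tens => i; case: (hA (s i) (x i)).
by apply: tr_tens => i; case: (hA (s i) (x i)).
Qed.

End TensorStates.

Section ShrunkCodes.
Variable R : realType.
Local Notation C := (R[i]).

Lemma psd_code_compl d l M (D : 'I_M -> 'M[C]_(pdim d l)) (i : 'I_M) :
  is_code D -> psd (1%:M - D i).
Proof.
move=> [psd_D psd_compl].
have -> : 1%:M - D i = (1%:M - \sum_(j < M) D j) + \sum_(j < M | j != i) D j.
  by rewrite (bigD1 i) //= opprD addrA subrK.
apply: psdD => //; rewrite big_mkcond; apply: psd_sum => j.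
by case: ifP => _; [exact: psd_D | exact: psd0].
Qed.

Lemma is_code_scale d l M (D : 'I_M -> 'M[C]_(pdim d l)) (c : R) :
  0 <= c <= 1 -> is_code D -> is_code (fun i => c%:C%C *: D i).
Proof.
move=> /andP[c0 c1] [psd_D psd_compl]; split => [i|]; first exact: psdZ.
have -> : 1%:M - \sum_(i < M) c%:C%C *: D i
    = (1 - c)%:C%C *: 1%:M + c%:C%C *: (1%:M - \sum_(i < M) D i).
  by rewrite scalerBr -scaler_sumr rmorphB rmorph1 scalerBl scale1r addrA subrK.
by apply: psdD; apply: psdZ => //; [rewrite subr_ge0 | exact: psd1].
Qed.

Lemma bigmin_scale (I : finType) (F : I -> R) (c : R) : 0 <= c <= 1 ->
  c * \big[Num.min/1]_i F i <= \big[Num.min/1]_i (c * F i).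
Proof.
move=> /andP[c0 c1]; apply: le_bigmin => [|i _]; last exact/ler_wpM2l/bigmin_le.
by apply: le_trans c1; rewrite -[leRHS]mulr1 ler_wpM2l ?bigmin_le_id.
Qed.

Lemma min_succ_scale (S X : finType) d (A : S -> X -> 'M[C]_d) l M
    (x : 'I_M -> 'I_l -> X) (D : 'I_M -> 'M[C]_(pdim d l)) (c : R) :
  0 <= c <= 1 -> c * min_succ A x D <= min_succ A x (fun i => c%:C%C *: D i).
Proof.
move=> c01; apply: le_trans (bigmin_scale _ c01) _; apply: le_bigmin2 => i _.
apply: le_trans (bigmin_scale _ c01) _; apply: le_bigmin2 => s _.
by rewrite Re_tr_scale.
Qed.

Definition shrink (l : nat) : R := 1 - harmonic l.

Lemma shrink_ge0 l : 0 <= shrink l.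
Proof.
rewrite /shrink; have -> : harmonic l = l.+1%:R^-1 :> R by [].
by rewrite subr_ge0 invf_le1 ?ltr0Sn // ler1n.
Qed.

Lemma shrink_lt1 l : shrink l < 1.
Proof. by rewrite ltrBlDr ltrDl harmonic_gt0. Qed.

Lemma cvg_shrink : shrink @ \oo --> (1 : R).
Proof.
rewrite -[X in _ --> X]subr0; apply: cvgB; [exact: cvg_cst | exact: cvg_harmonic].
Qed.

End ShrunkCodes.

Theorem lemma11 (R : realType) (S X : finType) (d : nat)
  (A : S -> X -> 'M[R[i]]_d) :
  is_AVcqC A ->
  (0 < cap_det A)%E ->
  forall r : R, 0 < r -> (r%:E < cap_det A)%E ->
  forall (M : nat -> nat) (x : forall l, 'I_(M l) -> 'I_l -> X)
         (D : forall l, 'I_(M l) -> 'M[R[i]]_(pdim d l)),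
    (forall l, is_code (D l)) ->
    (r%:E <= rate_liminf M)%E ->
    (fun l => min_succ A (x l) (D l)) @ \oo --> (1 : R) ->
  exists Dt : forall l, 'I_(M l) -> 'M[R[i]]_(pdim d l),
    (forall l, is_code (Dt l)) /\
    (r%:E <= rate_liminf M)%E /\
    (fun l => min_succ A (x l) (Dt l)) @ \oo --> (1 : R) /\
    (forall l (i : 'I_(M l)) (s : 'I_l -> S),
        complex.Re (\tr (Atens A s (x l i) *m Dt l i)) < 1).
Proof.
move=> hA _ r _ _ M x D codeD rateM succ_to1.
have shrink01 l : 0 <= shrink R l <= 1 by rewrite shrink_ge0 ltW ?shrink_lt1.
exists (fun l i => (shrink R l)%:C%C *: D l i); split; last split => //; last split.
- by move=> l; apply: is_code_scale (codeD l).
- apply: (@squeeze_cvgr _ _ _ _ (fun l => shrink R l * min_succ A (x l) (D l))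
                                (fun=> 1)); last exact: cvg_cst.
    by apply: nearW => l; rewrite min_succ_scale //= bigmin_le_id.
  by rewrite -[X in _ --> X]mulr1; apply: cvgM; [exact: cvg_shrink | exact: succ_to1].
- move=> l i s; rewrite Re_tr_scale; apply: le_lt_trans (shrink_lt1 R l).
  rewrite -[leRHS]mulr1 ler_wpM2l ?shrink_ge0 //.
  exact: Re_tr_state_le1 (is_state_Atens _ _ hA) (psd_code_compl _ (codeD l)).
Qed.
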